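(* Let $(M_0,g_0)$ be a smooth three-dimensional Riemannian manifold and $M\subset M_0$ an embedded two-dimensional submanifold with induced metric $g$. Work locally, on an open set of $M_0$ meeting $M$ on which there is an adapted orthonormal frame $\{b^1,b^2,b^3\}$: along $M$ the fields $b^1,b^2$ are tangent to $M$ and $b^3$ is a unit normal. Let $b_z^1,b_z^2$ be the restrictions of $b^1,b^2$ to $M$. Let $v=v^1b_z^1+v^2b_z^2$ be a smooth vector field on $M$ with $\mathsf{div}(v)=0$ (divergence with respect to $g$). Then there exists a vector field $u=u^1b^1+u^2b^2+u^3b^3$ on a neighborhood of $M$ in $M_0$ such that: (i) $u^3=0$ on $M$ and $u^j|_M=v^j$ for $j=1,2$; (ii) $\mathsf{div}(u)|_M=\mathsf{div}(v)$; (iii) $\mathsf{div}(u)=0$ on that neighborhood of $M$, where the divergence is with respect to $g_0$.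
   Context: All statements are local. ''A neighborhood of $M$'' means an open subset of $M_0$ containing the relevant (sufficiently small) portion of $M$. *)

From HB Require Import structures.
From mathcomp Require Import all_boot all_order all_algebra.
From mathcomp Require Import all_classical all_reals all_analysis.
Set Implicit Arguments. Unset Strict Implicit. Unset Printing Implicit Defensive.
Import Order.TTheory GRing.Theory Num.Theory.
Import numFieldNormedType.Exports.
Local Open Scope classical_set_scope.
Local Open Scope ring_scope.

Section Defs.
Variable R : realType.

Definition edir n (i : 'I_n) : 'rV[R]_n := delta_mx 0 i.

Fixpoint iter_partial n (l : seq 'I_n) (f : 'rV[R]_n -> R) : 'rV[R]_n -> R :=
  match l with
  | [::] => f
  | i :: l' => fun x => 'D_(edir i) (iter_partial l' f) x
  end.

Definition smooth_on n (U : set 'rV[R]_n) (f : 'rV[R]_n -> R) : Prop :=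
  forall (l : seq 'I_n) (x : 'rV[R]_n), U x -> differentiable (iter_partial l f) x.

Definition riemannian_on n (U : set 'rV[R]_n) (g : 'rV[R]_n -> 'M[R]_n) : Prop :=
  (forall i j, smooth_on U (fun x => g x i j)) /\
  (forall x, U x -> (g x)^T = g x) /\
  (forall x, U x -> forall w : 'rV[R]_n, w != 0 -> 0 < (w *m g x *m w^T) 0 0).

Definition gdot n (G : 'M[R]_n) (a b : 'rV[R]_n) : R := (a *m G *m b^T) 0 0.

Definition divg n (g : 'rV[R]_n -> 'M[R]_n) (X : 'rV[R]_n -> 'rV[R]_n)
  (x : 'rV[R]_n) : R :=
  (Num.sqrt (\det (g x)))^-1 *
  \sum_(i < n) 'D_(edir i) (fun y => Num.sqrt (\det (g y)) * X y 0 i) x.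

(* the slice M = {x_3 = 0}: embedding of R^2 into R^3 *)
Definition emb (y : 'rV[R]_2) : 'rV[R]_3 :=
  \row_(i < 3) (if (i < 2)%N then y 0 (inord i) else 0).

Definition ord23 (a : 'I_2) : 'I_3 := widen_ord (isT : (2 <= 3)%N) a.

Definition induced_metric (g0 : 'rV[R]_3 -> 'M[R]_3) (y : 'rV[R]_2) : 'M[R]_2 :=
  \matrix_(a < 2, b < 2) g0 (emb y) (ord23 a) (ord23 b).

Definition frame_field n m (b : 'I_m -> 'rV[R]_n -> 'rV[R]_n) (c : 'I_m -> 'rV[R]_n -> R)
  (x : 'rV[R]_n) : 'rV[R]_n := \sum_(j < m) c j x *: b j x.

End Defs.

From HB Require Import structures.
From mathcomp Require Import all_boot all_order all_algebra.
From mathcomp Require Import all_classical all_reals all_analysis.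
Import Order.TTheory GRing.Theory Num.Theory.
Import numFieldNormedType.Exports.
Local Open Scope classical_set_scope.
Local Open Scope ring_scope.
Set Implicit Arguments. Unset Strict Implicit. Unset Printing Implicit Defensive.

(* In the chart M = {x_3 = 0}. Let B be the matrix whose rows are the frame b^1, b^2, b^3;
   orthonormality gives det g0 * (det B)^2 = 1, so sqrt (det g0) = |det B|^-1.
   Let V be the coordinate vector of v along M and y the projection of x on M. Put
   W_a(x) = V^a(y) / det B(y) for a = 1, 2 and W_3(x) = - x_3 (d_1 W_1 + d_2 W_2)(y),
   so that d_1 W_1 + d_2 W_2 + d_3 W_3 = 0. The field X := (det B) W satisfies
   sqrt (det g0) X = sg (det B) W, and the sign of det B is locally constant, hence
   div X = 0 near M. On M we have x_3 = 0, and b^1, b^2 are tangent, so X = V there;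
   u is X written in the frame. The hypothesis div v = 0 is only needed for (ii). *)

Lemma derive_line (R : numFieldType) (V W : normedModType R) (f : V -> W)
    (x v : V) (c : W) :
  (forall h : R, f (h *: v + x) = f x + h *: c) -> 'D_v f x = c.
Proof.
move=> fl; apply: cvg_lim => //; apply: cvg_near_cst; near=> h.
rewrite /= fl addrC addKr scalerA mulVf ?scale1r //; near: h.
exact: nbhs_dnbhs_neq.
Unshelve. all: by end_near. Qed.

Lemma derive_sum_coord (R : realType) n (f : 'rV[R]_n -> R) (v x : 'rV[R]_n) :
  differentiable f x -> 'D_v f x = \sum_(k < n) v 0 k * 'D_(edir R k) f x.
Proof.
move=> df; rewrite deriveE // {1}(row_sum_delta v) linear_sum.
by apply: eq_bigr => k _; rewrite linearZ deriveE.
Qed.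

Section SmoothCalculus.
Variables (R : realType) (n : nat).
Implicit Types (f g : 'rV[R]_n -> R) (x : 'rV[R]_n).

Lemma near_eq_differentiable f g x :
  (\forall y \near x, f y = g y) -> differentiable f x -> differentiable g x.
Proof.
move=> fg df; have -> : g = f + (g - f) by rewrite addrC subrK.
apply: differentiableD => //.
have gf0 : \forall h \near (0 : 'rV[R]_n), ((g - f) \o shift x) h = 0.
  by rewrite (near_shift x); near=> y; rewrite /= sub0r subrK !fctE (near fg y) ?subrr.
have gfo : (g - f) \o shift x = cst ((g - f) x) + \0 +o_ (0 : 'rV[R]_n) id.
  have := nbhs_singleton gf0; rewrite /= add0r => ->.
  apply/eqaddoP => e e0; rewrite addr0 subr0.
  by near=> h; rewrite (near gf0 h) // normr0 mulr_ge0 // ltW.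
have d0 := @diff_unique _ _ _ (g - f) \0 x (@cst_continuous _ _ 0) gfo.
by apply/diff_locallyP; rewrite d0; split => //; exact: cst_continuous.
Unshelve. all: by end_near. Qed.

Lemma smooth_on_subset (U V : set 'rV[R]_n) f :
  V `<=` U -> smooth_on U f -> smooth_on V f.
Proof. by move=> VU sf l x /VU; exact: sf. Qed.

Lemma iter_partial_cat l l' f :
  iter_partial (l ++ l') f = iter_partial l (iter_partial l' f).
Proof. by elim: l => //= i l ->. Qed.

Variable N : set 'rV[R]_n.
Hypothesis oN : open N.

Let near_N x : N x -> \forall y \near x, N y.
Proof. by move=> Nx; apply: open_nbhs_nbhs. Qed.

Lemma eq_on_derive f g v x :
  (forall y, N y -> f y = g y) -> N x -> 'D_v f x = 'D_v g x.
Proof.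
move=> fg /near_N Nx; apply: near_eq_derive.
by near=> y; apply: fg; near: y.
Unshelve. all: by end_near. Qed.

Lemma eq_on_differentiable f g x : (forall y, N y -> f y = g y) -> N x ->
  differentiable f x -> differentiable g x.
Proof.
move=> fg /near_N Nx; apply: near_eq_differentiable.
by near=> y; apply: fg; near: y.
Unshelve. all: by end_near. Qed.

Lemma eq_on_iter_partial l f g x : (forall y, N y -> f y = g y) -> N x ->
  iter_partial l f x = iter_partial l g x.
Proof.
move=> fg; elim: l x => [|i l IH] x Nx /=; first exact: fg.
exact: eq_on_derive.
Qed.

Lemma eq_on_smooth f g :
  (forall y, N y -> f y = g y) -> smooth_on N f -> smooth_on N g.
Proof.
move=> fg sf l x Nx; apply: (eq_on_differentiable _ Nx (sf l x Nx)).
by move=> y Ny; exact: eq_on_iter_partial.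
Qed.

Lemma smooth_partial f i :
  smooth_on N f -> smooth_on N (fun x => 'D_(edir R i) f x).
Proof. by move=> sf l x Nx; have := sf (l ++ [:: i]) x Nx; rewrite iter_partial_cat. Qed.

Lemma smooth_differentiable f x : smooth_on N f -> N x -> differentiable f x.
Proof. by move=> sf; exact: sf [::] x. Qed.

Lemma smooth_derivable f x v : smooth_on N f -> N x -> derivable f x v.
Proof. by move=> sf Nx; exact/diff_derivable/(smooth_differentiable sf). Qed.

Lemma smooth_coind (C : ('rV[R]_n -> R) -> Prop) :
  (forall F x, C F -> N x -> differentiable F x) ->
  (forall F i, C F -> exists2 G, C G & forall x, N x -> 'D_(edir R i) F x = G x) ->
  forall F, C F -> smooth_on N F.
Proof.
move=> Cdiff Cder.
have iterC l F : C F -> exists2 G, C G & forall x, N x -> iter_partial l F x = G x.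
  elim: l F => [|i l IH] F CF; first by exists F.
  have [G CG eG] := IH F CF; have [G' CG' eG'] := Cder G i CG.
  by exists G' => // x Nx /=; rewrite -eG' //; exact: eq_on_derive.
move=> F CF l x Nx; have [G CG eG] := iterC l F CF.
by apply: (@eq_on_differentiable G) => // [y Ny|]; [rewrite eG|exact: Cdiff].
Qed.

Lemma smooth_cst c : smooth_on N (fun=> c).
Proof.
apply: (@smooth_coind (fun F => exists c, F = fun=> c)); last by exists c.
  by move=> _ x [c' ->] _; exact: differentiable_cst.
move=> _ i [c' ->]; exists (fun=> 0); first by exists 0.
by move=> x _; exact: derive_cst.
Qed.

Lemma smooth_coord k : smooth_on N (fun x => x 0 k).
Proof.
pose C F := (exists c, F = fun=> c) \/ F = (fun x => x 0 k).
apply: (@smooth_coind C); last by right.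
  move=> _ x [[c ->]|->] _; [exact: differentiable_cst|exact: differentiable_coord].
move=> _ i [[c ->]|->].
  by exists (fun=> 0); [left; exists 0|move=> x _; exact: derive_cst].
exists (fun=> edir R i 0 k); first by left; eexists.
by move=> x _; apply: derive_line => h; rewrite !mxE addrC.
Qed.

(* By the Leibniz rule, finite sums of products of smooth functions form a class closed
   under partial derivatives. *)
Lemma smooth_sum_mul m (p q : 'I_m -> 'rV[R]_n -> R) :
  (forall k, smooth_on N (p k)) -> (forall k, smooth_on N (q k)) ->
  smooth_on N (fun x => \sum_(k < m) p k x * q k x).
Proof.
move=> sp sq.
pose C F := exists m (p q : 'I_m -> 'rV[R]_n -> R),
  [/\ forall k, smooth_on N (p k), forall k, smooth_on N (q k) &
      forall x, N x -> F x = (\sum_(k < m) p k * q k) x].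
apply: (@smooth_coind C); last by exists m, p, q; split => // x _; rewrite fct_sumE.
  move=> F x [m' [p' [q' [sp' sq' eF]]]] Nx.
  apply: (eq_on_differentiable (fun y Ny => esym (eF y Ny)) Nx).
  apply: differentiable_sum => k; apply: differentiableM;
    exact: smooth_differentiable.
move=> F i [m' [p' [q' [sp' sq' eF]]]].
pose D (h : 'rV[R]_n -> R) x := 'D_(edir R i) h x.
pose p'' (j : 'I_(m' + m')) :=
  match fintype.split j with inl k => D (p' k) | inr k => p' k end.
pose q'' (j : 'I_(m' + m')) :=
  match fintype.split j with inl k => q' k | inr k => D (q' k) end.
have split_l k : fintype.split (lshift m' k) = inl k := unsplitK (inl k).
have split_r k : fintype.split (rshift m' k) = inr k := unsplitK (inr k).
exists (\sum_(j < m' + m') p'' j * q'' j).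
  exists (m' + m'), p'', q''; split => // j; rewrite /p'' /q'';
    by case: fintype.split => k //; exact: smooth_partial.
move=> x Nx; rewrite (eq_on_derive _ eF Nx) derive_sum => [|k]; last first.
  by apply: derivableM; exact: smooth_derivable.
rewrite !fct_sumE big_split_ord /= -big_split; apply: eq_bigr => k _.
rewrite /p'' /q'' !split_l !split_r /= deriveM; try exact: smooth_derivable.
by rewrite addrC; congr (_ + _); exact: mulrC.
Qed.

Lemma smooth_mul f g :
  smooth_on N f -> smooth_on N g -> smooth_on N (fun x => f x * g x).
Proof.
move=> sf sg; apply: eq_on_smooth (@smooth_sum_mul 1 (fun=> f) (fun=> g) _ _) => //.
by move=> x _; rewrite big_ord1.
Qed.

Lemma smooth_add f g :
  smooth_on N f -> smooth_on N g -> smooth_on N (fun x => f x + g x).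
Proof.
move=> sf sg.
apply: (eq_on_smooth _ (@smooth_sum_mul 2
  (fun k => if val k == 0%N then f else g) (fun=> fun=> 1) _ _)) => [x _|k|k].
- by rewrite big_ord_recl big_ord1 /= !mulr1.
- by case: ifP.
- exact: smooth_cst.
Qed.

Lemma smooth_sum (I : Type) (r : seq I) (P : pred I) (F : I -> 'rV[R]_n -> R) :
  (forall i, P i -> smooth_on N (F i)) ->
  smooth_on N (fun x => \sum_(i <- r | P i) F i x).
Proof.
move=> sF; rewrite -fct_sumE; elim/big_ind: _ => //; first exact: smooth_cst.
by move=> f g; exact: smooth_add.
Qed.

Lemma smooth_prod (I : Type) (r : seq I) (P : pred I) (F : I -> 'rV[R]_n -> R) :
  (forall i, P i -> smooth_on N (F i)) ->
  smooth_on N (fun x => \prod_(i <- r | P i) F i x).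
Proof.
move=> sF; rewrite -fct_prodE; elim/big_ind: _ => //; first exact: smooth_cst.
by move=> f g; exact: smooth_mul.
Qed.

Lemma smooth_det m (A : 'rV[R]_n -> 'M[R]_m) :
  (forall i j, smooth_on N (fun x => A x i j)) -> smooth_on N (fun x => \det (A x)).
Proof.
move=> sA; apply: smooth_sum => s _; apply: smooth_mul; first exact: smooth_cst.
by apply: smooth_prod => i _; exact: sA.
Qed.

End SmoothCalculus.

Section LinearChangeOfVariables.
Variables (R : realType) (n m : nat) (A : 'M[R]_(n, m)).

Lemma differentiable_mulmx x : differentiable (fun y : 'rV[R]_n => y *m A) x.
Proof.
have -> : (fun y : 'rV[R]_n => y *m A) =
          \sum_(k < n) (fun y : 'rV[R]_n => y 0 k *: row k A).
  by apply/funext => y; rewrite fct_sumE mulmx_sum_row.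
by apply: differentiable_sum => k; apply: differentiableZl; exact: differentiable_coord.
Qed.

Lemma continuous_mulmx : continuous (fun y : 'rV[R]_n => y *m A).
Proof. by move=> x; exact: (differentiable_continuous (differentiable_mulmx x)). Qed.

Lemma derive_comp_mulmx (f : 'rV[R]_m -> R) v x :
  'D_v (fun y => f (y *m A)) x = 'D_(v *m A) f (x *m A).
Proof.
rewrite /derive.
suff -> : (fun h : R => h^-1 *: (((fun y => f (y *m A)) \o shift x) (h *: v) - f (x *m A))) =
  (fun h : R => h^-1 *: ((f \o shift (x *m A)) (h *: (v *m A)) - f (x *m A))) by [].
by apply/funext => h /=; rewrite mulmxDl scalemxAl.
Qed.

Lemma smooth_comp_mulmx (V : set 'rV[R]_m) (N : set 'rV[R]_n) (f : 'rV[R]_m -> R) :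
  open V -> open N -> (forall x, N x -> V (x *m A)) -> smooth_on V f ->
  smooth_on N (fun x => f (x *m A)).
Proof.
move=> oV oN NV sf.
pose C F := exists2 g, smooth_on V g & forall x, N x -> F x = g (x *m A).
apply: (@smooth_coind _ _ _ oN C); last by exists f; first exact: sf.
  move=> F x [g sg eF] Nx.
  apply: (eq_on_differentiable oN (fun y Ny => esym (eF y Ny)) Nx).
  apply: (@differentiable_comp _ _ _ _ (fun y => y *m A) g).
    exact: differentiable_mulmx.
  exact: smooth_differentiable sg (NV x Nx).
move=> F i [g sg eF].
pose c := edir R i *m A.
exists (fun x => \sum_(k < m) c 0 k * 'D_(edir R k) g (x *m A)).
  exists (fun y => \sum_(k < m) c 0 k * 'D_(edir R k) g y) => //.
  apply: (smooth_sum oV) => k _.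
  by apply: (smooth_mul oV); [exact: smooth_cst|exact: smooth_partial].
move=> x Nx; rewrite (eq_on_derive oN _ eF Nx) derive_comp_mulmx.
by rewrite derive_sum_coord //; exact: smooth_differentiable sg (NV x Nx).
Qed.

End LinearChangeOfVariables.

Lemma frame_field_coord (R : realType) n m (e : 'I_m -> 'rV[R]_n -> 'rV[R]_n) c x i :
  frame_field e c x 0 i = \sum_(j < m) c j x * e j x 0 i.
Proof. by rewrite /frame_field summxE; apply: eq_bigr => j _; rewrite !mxE. Qed.

Lemma gdotE (R : realType) n (G : 'M[R]_n) (a c : 'rV[R]_n) :
  gdot G a c = \sum_(k < n) (\sum_(l < n) a 0 l * G l k) * c 0 k.
Proof. by rewrite /gdot !mxE; apply: eq_bigr => k _; rewrite !mxE. Qed.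

Lemma gdot_suml (R : realType) n m (G : 'M[R]_n) (c : 'I_m -> R)
    (a : 'I_m -> 'rV[R]_n) w :
  gdot G (\sum_(j < m) c j *: a j) w = \sum_(j < m) c j * gdot G (a j) w.
Proof.
rewrite /gdot !mulmx_suml summxE; apply: eq_bigr => j _.
by rewrite -!scalemxAl mxE.
Qed.

Section OrthonormalFrame.
Variables (R : realType) (n : nat) (G : 'M[R]_n) (e : 'I_n -> 'rV[R]_n).
Hypothesis e_orthonormal : forall j k, gdot G (e j) (e k) = (j == k)%:R.

Definition frame_mx : 'M[R]_n := \matrix_j e j.

Lemma frame_mx_metric : frame_mx *m G *m frame_mx^T = 1%:M.
Proof.
apply/matrixP => j k; rewrite [RHS]mxE -e_orthonormal /gdot !mxE.
apply: eq_bigr => l _; rewrite !mxE; congr (_ * _).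
by apply: eq_bigr => i _; rewrite !mxE.
Qed.

Lemma det_metric_frame : \det G * \det frame_mx ^+ 2 = 1.
Proof.
have := congr1 determinant frame_mx_metric.
by rewrite !det_mulmx det_tr det1 expr2 mulrAC mulrC.
Qed.

Lemma det_frame_neq0 : \det frame_mx != 0.
Proof.
by apply: contra_eq_neq det_metric_frame => ->; rewrite expr0n mulr0 eq_sym oner_neq0.
Qed.

Lemma inv_det_frame : (\det frame_mx)^-1 = \det frame_mx * \det G.
Proof.
apply: (mulIf det_frame_neq0); rewrite mulVf ?det_frame_neq0 //.
by rewrite -det_metric_frame expr2 mulrA [\det frame_mx * _]mulrC.
Qed.

Lemma sqrt_det_metric : Num.sqrt (\det G) = `|\det frame_mx|^-1.
Proof.
have -> : \det G = `|\det frame_mx|^-1 ^+ 2.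
  rewrite exprVn -normrX ger0_norm ?exprn_even_ge0 //.
  apply: (mulIf (expf_neq0 2 det_frame_neq0)).
  by rewrite det_metric_frame mulVf ?expf_neq0 ?det_frame_neq0.
by rewrite sqrtr_sqr normfV normr_id.
Qed.

Lemma frame_expand (X : 'rV[R]_n) : \sum_j gdot G X (e j) *: e j = X.
Proof.
have GBtB : (G *m frame_mx^T) *m frame_mx = 1%:M.
  by apply: mulmx1C; rewrite mulmxA frame_mx_metric.
rewrite -[RHS]mulmx1 -GBtB !mulmxA mulmx_sum_row; apply: eq_bigr => j _.
rewrite rowK; congr (_ *: _); rewrite /gdot !mxE; apply: eq_bigr => k _.
by rewrite !mxE.
Qed.

End OrthonormalFrame.

Lemma invr_normr_mul (R : realFieldType) (x : R) : x != 0 -> `|x|^-1 * x = Num.sg x.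
Proof. by move=> x0; rewrite normrEsg invfM mulfVK // invr_sg. Qed.

Lemma near_sgr (T : topologicalType) (R : realType) (f : T -> R) x :
  {for x, continuous f} -> f x != 0 -> \forall y \near x, Num.sg (f y) = Num.sg (f x).
Proof.
move=> cf fx0; case: (ltgtP (f x) 0) => [fx_lt0|fx_gt0|/eqP]; last by rewrite (negbTE fx0).
  by near=> y; rewrite !ltr0_sg //; near: y; exact: (cvgr_lt (f x) cf 0 fx_lt0).
by near=> y; rewrite !gtr0_sg //; near: y; exact: (cvgr_gt (f x) cf 0 fx_gt0).
Unshelve. all: by end_near. Qed.

Lemma divg_eq0 (R : realType) n (g : 'rV[R]_n -> 'M[R]_n) (X : 'rV[R]_n -> 'rV[R]_n)
    (W : 'I_n -> 'rV[R]_n -> R) (c : R) x :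
  (forall i, derivable (W i) x (edir R i)) ->
  \sum_i 'D_(edir R i) (W i) x = 0 ->
  (\forall y \near x, forall i, Num.sqrt (\det (g y)) * X y 0 i = c * W i y) ->
  divg g X x = 0.
Proof.
move=> dW divW gX; rewrite /divg.
suff -> : \sum_i 'D_(edir R i) (fun y => Num.sqrt (\det (g y)) * X y 0 i) x =
          c * \sum_i 'D_(edir R i) (W i) x by rewrite divW !mulr0.
rewrite mulr_sumr; apply: eq_bigr => i _; rewrite -deriveMl //.
by apply: near_eq_derive; near=> y; rewrite (near gX y).
Unshelve. all: by end_near. Qed.

Lemma ord23_0 : ord23 0 = 0. Proof. exact: val_inj. Qed.
Lemma ord23_1 : ord23 1 = 1. Proof. exact: val_inj. Qed.

Lemma sum_ord2 (R : nmodType) (F : 'I_2 -> R) : \sum_(a < 2) F a = F 0 + F 1.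
Proof. by rewrite big_ord_recl big_ord1; congr (F _ + F _); exact: val_inj. Qed.

Section Slice.
Variable R : realType.

Definition lift_mx : 'M[R]_(2, 3) := \matrix_(a, i) (ord23 a == i)%:R.

Definition projM (x : 'rV[R]_3) : 'rV[R]_2 := x *m lift_mx^T.

Lemma derive_comp_projM (f : 'rV[R]_2 -> R) v x :
  'D_v (fun y => f (projM y)) x = 'D_(projM v) f (projM x).
Proof. exact: derive_comp_mulmx. Qed.

Lemma smooth_comp_projM (V : set 'rV[R]_2) (N : set 'rV[R]_3) (f : 'rV[R]_2 -> R) :
  open V -> open N -> (forall x, N x -> V (projM x)) -> smooth_on V f ->
  smooth_on N (fun x => f (projM x)).
Proof. exact: smooth_comp_mulmx. Qed.

Lemma projM_coord x a : projM x 0 a = x 0 (ord23 a).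
Proof.
rewrite !mxE (bigD1 (ord23 a)) //= !mxE eqxx mulr1 big1 ?addr0 // => i ia.
by rewrite !mxE eq_sym (negbTE ia) mulr0.
Qed.

Lemma emb_mulmx y : emb y = y *m lift_mx.
Proof.
apply/rowP => i; rewrite !mxE big_ord_recl big_ord1 !mxE.
by case: i => -[|[|[|//]]] i3 /=; rewrite ?mulr0 ?mulr1 ?addr0 ?add0r //;
  congr (y 0 _); apply: val_inj; rewrite /= inordK.
Qed.

Lemma open_emb_preimage (V : set 'rV[R]_3) : open V -> open [set y | V (emb y)].
Proof.
move=> oV; rewrite (_ : [set y | V (emb y)] = (fun y => y *m lift_mx) @^-1` V).
  by apply: open_comp => // y _; exact: continuous_mulmx.
by apply/funext => y /=; rewrite emb_mulmx.
Qed.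

Lemma open_projM_preimage (V : set 'rV[R]_2) : open V -> open [set x | V (projM x)].
Proof. by move=> oV; apply: open_comp => // x _; exact: continuous_mulmx. Qed.

Lemma smooth_comp_emb (V : set 'rV[R]_3) (f : 'rV[R]_3 -> R) :
  open V -> smooth_on V f -> smooth_on [set y | V (emb y)] (fun y => f (emb y)).
Proof.
move=> oV sf; rewrite (_ : (fun y => f (emb y)) = fun y => f (y *m lift_mx)).
  apply: smooth_comp_mulmx sf => //; first exact: open_emb_preimage.
  by move=> y /=; rewrite -emb_mulmx.
by apply/funext => y /=; rewrite emb_mulmx.
Qed.

Lemma projM_emb y : projM (emb y) = y.
Proof.
apply/rowP => a; rewrite projM_coord mxE /= ltn_ord.
by congr (y 0 _); apply: val_inj; rewrite /= inordK.
Qed.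

Lemma projM_edir_tangent (a : 'I_2) : projM (edir R (ord23 a)) = edir R a.
Proof.
apply/rowP => b; rewrite projM_coord !mxE.
by congr ((_ : bool)%:R); apply/eqP/eqP => [/(congr1 val)/val_inj|->].
Qed.

Lemma projM_edir_normal : projM (edir R 2) = 0.
Proof.
apply/rowP => a; rewrite projM_coord !mxE.
by case: a => -[|[|//]].
Qed.

Lemma projM_shift_normal (h : R) x : projM (h *: edir R 2 + x) = projM x.
Proof.
by rewrite /projM mulmxDl -scalemxAl -/(projM _) projM_edir_normal scaler0 add0r.
Qed.

End Slice.

Section SliceExtension.
Variables (R : realType) (G : 'I_2 -> 'rV[R]_2 -> R).

Definition flat_div (y : 'rV[R]_2) : R := \sum_(a < 2) 'D_(edir R a) (G a) y.

Definition slice_ext (i : 'I_3) (x : 'rV[R]_3) : R :=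
  if (i < 2)%N then G (inord i) (projM x) else - x 0 2 * flat_div (projM x).

Lemma derive_slice_ext_tangent (a : 'I_2) x :
  'D_(edir R (ord23 a)) (slice_ext (ord23 a)) x = 'D_(edir R a) (G a) (projM x).
Proof.
by rewrite /slice_ext /= ltn_ord inord_val derive_comp_projM projM_edir_tangent.
Qed.

Lemma derive_slice_ext_normal x :
  'D_(edir R 2) (slice_ext 2) x = - flat_div (projM x).
Proof.
apply: derive_line => h; rewrite /slice_ext /= projM_shift_normal !mxE eqxx mulr1.
by rewrite opprD mulrDl addrC; congr (_ + _); rewrite mulNr -mulrN.
Qed.

Lemma flat_div_slice_ext x : \sum_(i < 3) 'D_(edir R i) (slice_ext i) x = 0.
Proof.
rewrite big_ord_recr (_ : ord_max = 2); last exact: val_inj.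
rewrite derive_slice_ext_normal (eq_bigr (fun a => 'D_(edir R a) (G a) (projM x))).
  exact: subrr.
move=> a _; rewrite -derive_slice_ext_tangent (_ : widen_ord _ a = ord23 a) //.
exact: val_inj.
Qed.

Lemma slice_ext_emb i y :
  slice_ext i (emb y) = if (i < 2)%N then G (inord i) y else 0.
Proof. by rewrite /slice_ext projM_emb; case: ifP; rewrite // mxE /= oppr0 mul0r. Qed.

Lemma smooth_slice_ext (V : set 'rV[R]_2) (N : set 'rV[R]_3) i :
  open V -> open N -> (forall x, N x -> V (projM x)) ->
  (forall a, smooth_on V (G a)) -> smooth_on N (slice_ext i).
Proof.
move=> oV oN NV sG; rewrite /slice_ext; case: (i < 2)%N.
  exact: (smooth_comp_projM oV oN NV (sG _)).
apply: (smooth_mul oN).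
  apply: (eq_on_smooth oN _ (smooth_mul oN (smooth_cst oN (-1)) (smooth_coord oN 2))).
  by move=> x _; rewrite mulN1r.
apply: (smooth_comp_projM oV oN NV); apply: (smooth_sum oV) => a _.
exact: smooth_partial.
Qed.

End SliceExtension.

Section DivergenceFreeExtension.
Variables (R : realType) (U : set 'rV[R]_3) (g0 : 'rV[R]_3 -> 'M[R]_3).
Variables (b : 'I_3 -> 'rV[R]_3 -> 'rV[R]_3) (v : 'I_2 -> 'rV[R]_2 -> R).
Hypothesis oU : open U.
Hypothesis g0_smooth : forall i j, smooth_on U (fun x => g0 x i j).
Hypothesis b_smooth : forall j i, smooth_on U (fun x => b j x 0 i).
Hypothesis b_orthonormal :
  forall x, U x -> forall j k, gdot (g0 x) (b j x) (b k x) = (j == k)%:R.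
Hypothesis b_tangent : forall y, U (emb y) -> b 0 (emb y) 0 2 = 0 /\ b 1 (emb y) 0 2 = 0.
Hypothesis v_smooth : forall a, smooth_on [set y | U (emb y)] (v a).

Definition frame_det x := \det (frame_mx (fun j => b j x)).

Definition v_field y := frame_field (fun j => b (ord23 j)) (fun j _ => v j y) (emb y).

(* [frame_det * det g0] is [frame_det^-1] (inv_det_frame), written as a product so that
   its smoothness needs no quotient rule. *)
Definition flat_density (a : 'I_2) y :=
  v_field y 0 (ord23 a) * (frame_det (emb y) * \det (g0 (emb y))).

Definition ext_field x : 'rV[R]_3 := \row_i (slice_ext flat_density i x * frame_det x).

Definition ext_coord j x := gdot (g0 x) (ext_field x) (b j x).

Definition M_nbhd := U `&` [set x | U (emb (projM x))].

Lemma open_M_nbhd : open M_nbhd.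
Proof. exact: openI oU (open_projM_preimage (open_emb_preimage oU)). Qed.

Lemma M_nbhd_emb y : U (emb y) -> M_nbhd (emb y).
Proof. by move=> Uy; split; rewrite //= projM_emb. Qed.

Lemma smooth_frame_det : smooth_on U frame_det.
Proof.
apply: (smooth_det oU) => i k.
by apply: (eq_on_smooth oU _ (b_smooth i k)) => x _; rewrite mxE.
Qed.

Lemma smooth_flat_density a : smooth_on [set y | U (emb y)] (flat_density a).
Proof.
have oM := open_emb_preimage oU.
apply: (smooth_mul oM); last first.
  apply: (smooth_mul oM); first exact: (smooth_comp_emb oU smooth_frame_det).
  exact: (smooth_comp_emb oU (smooth_det oU g0_smooth)).
apply: (eq_on_smooth oM (fun y _ => esym (frame_field_coord _ _ _ _))).
apply: (smooth_sum oM) => j _; apply: (smooth_mul oM); first exact: v_smooth.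
exact: (smooth_comp_emb oU (b_smooth _ _)).
Qed.

Lemma smooth_ext_density i : smooth_on M_nbhd (slice_ext flat_density i).
Proof.
apply: (smooth_slice_ext _ (open_emb_preimage oU) open_M_nbhd) => //.
  by move=> x [].
exact: smooth_flat_density.
Qed.

Lemma smooth_ext_coord j : smooth_on M_nbhd (ext_coord j).
Proof.
have oN := open_M_nbhd; have NU : M_nbhd `<=` U by move=> x [].
have sX i : smooth_on M_nbhd (fun x => ext_field x 0 i).
  apply: (eq_on_smooth oN _ (smooth_mul oN (smooth_ext_density i)
    (smooth_on_subset NU smooth_frame_det))).
  by move=> x _; rewrite mxE.
apply: (eq_on_smooth oN (fun x _ => esym (gdotE _ _ _))).
apply: (smooth_sum oN) => k _; apply: (smooth_mul oN).
  apply: (smooth_sum oN) => l _; apply: (smooth_mul oN (sX l)).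
  exact: smooth_on_subset NU (g0_smooth _ _).
exact: smooth_on_subset NU (b_smooth _ _).
Qed.

Lemma frame_field_ext_coord x : U x -> frame_field b ext_coord x = ext_field x.
Proof. by move=> Ux; rewrite /frame_field /ext_coord (frame_expand (b_orthonormal Ux)). Qed.

Lemma divg_ext_field x : M_nbhd x -> divg g0 (frame_field b ext_coord) x = 0.
Proof.
move=> Nx; have Ux : U x by case: Nx.
have nearN : \forall y \near x, M_nbhd y.
  by apply: open_nbhs_nbhs; split => //; exact: open_M_nbhd.
have fd0 : frame_det x != 0 := det_frame_neq0 (b_orthonormal Ux).
have cfd : {for x, continuous frame_det}.
  exact/differentiable_continuous/(smooth_differentiable smooth_frame_det).
apply: (@divg_eq0 _ _ _ _ (slice_ext flat_density) (Num.sg (frame_det x))).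
- by move=> i; exact: smooth_derivable (smooth_ext_density i) Nx.
- exact: flat_div_slice_ext.
near=> y => i; have Uy : U y by case: (near nearN y).
rewrite frame_field_ext_coord // (sqrt_det_metric (b_orthonormal Uy)) mxE.
rewrite mulrCA invr_normr_mul ?(det_frame_neq0 (b_orthonormal Uy)) // mulrC.
by rewrite -/(frame_det y) (near (near_sgr cfd fd0) y).
Unshelve. all: by end_near. Qed.

Lemma ext_field_emb y : U (emb y) -> ext_field (emb y) = v_field y.
Proof.
move=> Uy; apply/rowP => i; rewrite mxE slice_ext_emb.
case: ifP => i_lt2.
  rewrite /flat_density -mulrA -(inv_det_frame (b_orthonormal Uy)).
  rewrite mulVf ?(det_frame_neq0 (b_orthonormal Uy)) // mulr1.
  by congr (v_field y 0 _); apply: val_inj; rewrite /= inordK.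
rewrite mul0r frame_field_coord sum_ord2 ord23_0 ord23_1.
have [b0 b1] := b_tangent Uy.
case: i i_lt2 => -[|[|[|//]]] //= ? _.
by rewrite (_ : Ordinal _ = 2) ?b0 ?b1 ?mulr0 ?addr0 //; exact: val_inj.
Qed.

Lemma ext_coord_emb y : U (emb y) ->
  [/\ ext_coord 2 (emb y) = 0, ext_coord 0 (emb y) = v 0 y & ext_coord 1 (emb y) = v 1 y].
Proof.
move=> Uy; rewrite /ext_coord ext_field_emb // /v_field /frame_field.
rewrite !gdot_suml !sum_ord2 ord23_0 ord23_1 !b_orthonormal //.
by split; rewrite /= ?mulr0 ?mulr1 ?addr0 ?add0r.
Qed.

End DivergenceFreeExtension.

Unset Implicit Arguments. Set Strict Implicit.

Theorem corollary2 (R : realType)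
  (U : set 'rV[R]_3) (g0 : 'rV[R]_3 -> 'M[R]_3)
  (b : 'I_3 -> 'rV[R]_3 -> 'rV[R]_3)
  (v : 'I_2 -> 'rV[R]_2 -> R) :
  open U ->
  riemannian_on U g0 ->
  (* smooth orthonormal frame on U *)
  (forall j i, smooth_on U (fun x => b j x 0 i)) ->
  (forall x, U x -> forall j k, gdot (g0 x) (b j x) (b k x) = (j == k)%:R) ->
  (* b^1, b^2 tangent to M = {x_3 = 0} along M *)
  (forall y, U (emb y) -> b 0 (emb y) 0 2 = 0 /\ b 1 (emb y) 0 2 = 0) ->
  (* v = v^1 b_z^1 + v^2 b_z^2 smooth on M, divergence free *)
  (forall a, smooth_on [set y | U (emb y)] (v a)) ->
  (forall y, U (emb y) ->
     divg (induced_metric g0)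
       (fun y' => \row_(a < 2) frame_field (fun j => b (ord23 j)) (fun j _ => v j y')
                       (emb y') 0 (ord23 a)) y = 0) ->
  exists (N : set 'rV[R]_3) (u : 'I_3 -> 'rV[R]_3 -> R),
    [/\ [/\ open N, N `<=` U & forall y, U (emb y) -> N (emb y)],
        (forall j, smooth_on N (u j)),
        (* (i) *)
        (forall y, U (emb y) ->
           [/\ u 2 (emb y) = 0, u 0 (emb y) = v 0 y & u 1 (emb y) = v 1 y]),
        (* (ii) *)
        (forall y, U (emb y) ->
           divg g0 (frame_field b u) (emb y) =
           divg (induced_metric g0)
             (fun y' => \row_(a < 2) frame_field (fun j => b (ord23 j)) (fun j _ => v j y')
                             (emb y') 0 (ord23 a)) y) &
        (* (iii) *)
        (forall x, N x -> divg g0 (frame_field b u) x = 0)].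
Proof.
move=> oU [g0_smooth _] b_smooth b_orthonormal b_tangent v_smooth div_v.
have divg_u x := divg_ext_field oU g0_smooth b_smooth b_orthonormal v_smooth (x := x).
exists (M_nbhd U), (ext_coord g0 b v); split.
- split; [exact: open_M_nbhd | by move=> x [] | exact: M_nbhd_emb].
- exact: smooth_ext_coord.
- exact: ext_coord_emb.
- by move=> y Uy; rewrite div_v // divg_u //; exact: M_nbhd_emb.
- exact: divg_u.
Qed.
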